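(* Let $K$ be a finite field, $G$ a finite group and $C$ a two-sided ideal of $KG$ such that the quotient algebra $KG/C$ is a Frobenius algebra. Then $C$ is checkable (as a right ideal). In particular the Jacobson radical $J(KG)$ is checkable.
   Context: A right ideal $I\le KG$ is called checkable if there is $v\in KG$ with $I=\{a\in KG: va=0\}$. A Frobenius algebra is a finite-dimensional $K$-algebra $A$ admitting a $K$-linear map $\lambda:A\to K$ whose kernel contains no nonzero left or right ideal. *)

From HB Require Import structures.
From mathcomp Require Import all_boot all_order all_algebra all_fingroup all_field.
Set Implicit Arguments. Unset Strict Implicit. Unset Printing Implicit Defensive.
Import GRing.Theory.
Local Open Scope ring_scope.

(* The group algebra KG of the finite group gT (G is the whole group type)
   over the finite field K is represented by the K-vector space
   {ffun gT -> K} (coordinates in the basis G), with convolution product. *)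

Definition ga_one (K : finFieldType) (gT : finGroupType) : {ffun gT -> K} :=
  [ffun g => (g == 1%g)%:R].

Definition ga_mul (K : finFieldType) (gT : finGroupType)
  (a b : {ffun gT -> K}) : {ffun gT -> K} :=
  [ffun g => \sum_(h : gT) a h * b (h^-1 * g)%g].

(* left / right ideals of KG (subsets closed under 0, +, and multiplication
   by KG on the appropriate side; K-scaling follows via scalar elements). *)
Definition is_left_idealb (K : finFieldType) (gT : finGroupType)
  (I : {set {ffun gT -> K}}) : bool :=
  [&& (0 : {ffun gT -> K}) \in I,
      [forall a, forall b, (a \in I) ==> (b \in I) ==> (a + b \in I)]
    & [forall a, forall x, (a \in I) ==> (ga_mul x a \in I)]].

Definition is_right_idealb (K : finFieldType) (gT : finGroupType)
  (I : {set {ffun gT -> K}}) : bool :=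
  [&& (0 : {ffun gT -> K}) \in I,
      [forall a, forall b, (a \in I) ==> (b \in I) ==> (a + b \in I)]
    & [forall a, forall x, (a \in I) ==> (ga_mul a x \in I)]].

Definition is_twosided_ideal (K : finFieldType) (gT : finGroupType)
  (I : {set {ffun gT -> K}}) : Prop :=
  is_left_idealb I /\ is_right_idealb I.

Definition checkable (K : finFieldType) (gT : finGroupType)
  (I : {set {ffun gT -> K}}) : Prop :=
  exists v : {ffun gT -> K}, I = [set a | ga_mul v a == 0].

(* KG/C is a Frobenius algebra: there is a K-linear map
   lambda-bar : KG/C -> K whose kernel contains no nonzero left or right
   ideal of KG/C.  Such maps are exactly the K-linear maps lambda : KG -> K
   vanishing on C; (one-sided) ideals of KG/C are the images of (one-sided)
   ideals L of KG, and such an image is zero iff L is contained in C. *)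
Definition frobenius_quotient (K : finFieldType) (gT : finGroupType)
  (C : {set {ffun gT -> K}}) : Prop :=
  exists lam : {ffun gT -> K} -> K,
    [/\ (forall (k : K) (a b : {ffun gT -> K}), lam ([ffun g => k * a g] + b) = k * lam a + lam b),
        (forall c, c \in C -> lam c = 0),
        (forall L : {set {ffun gT -> K}}, is_left_idealb L ->
            (forall a, a \in L -> lam a = 0) -> L \subset C)
      & (forall L : {set {ffun gT -> K}}, is_right_idealb L ->
            (forall a, a \in L -> lam a = 0) -> L \subset C)].

Definition maximal_left_idealb (K : finFieldType) (gT : finGroupType)
  (M : {set {ffun gT -> K}}) : bool :=
  [&& is_left_idealb M, M != setT &
      [forall N : {set {ffun gT -> K}},
         (is_left_idealb N && (M \subset N)) ==> ((N == M) || (N == setT))]].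

Definition jacobson (K : finFieldType) (gT : finGroupType) : {set {ffun gT -> K}} :=
  [set a | [forall M : {set {ffun gT -> K}}, maximal_left_idealb M ==> (a \in M)]].

From HB Require Import structures.
From mathcomp Require Import all_boot all_order all_algebra all_fingroup all_field.
Set Implicit Arguments. Unset Strict Implicit. Unset Printing Implicit Defensive.
Import GRing.Theory.
Local Open Scope ring_scope.

(* A K-linear form lambda on KG is x |-> tr (w x) for some w, where tr reads off
   the coefficient of 1 and (a, b) |-> tr (a b) is nondegenerate.  If lambda
   vanishes on C, then w a = 0 puts the right ideal a KG in the kernel of lambda,
   hence in C.
   For the radical J, write 1 as a sum of orthogonal primitive idempotents e.
   A linear form separating e from J yields a nonzero s_e in eKGe with
   s_e J = 0; let v be the sum of the s_e.  If v a = 0 then s_e (e a) = 0.  Some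
   power of w = e a y e is an idempotent of the finite ring eKGe, hence 0 or e
   by primitivity, and s_e w = 0 rules out e; so every such w is nilpotent,
   e a lies in J, and so does a = sum e a. *)

Section RingFacts.
Variable R : pzRingType.

Lemma nilpotent_one_sub_left_inv (u : R) n : u ^+ n = 0 -> exists v, v * (1 - u) = 1.
Proof.
move=> un0; exists (\sum_(i < n) u ^+ i).
have comm_u : (\sum_(i < n) u ^+ i) * u = u * \sum_(i < n) u ^+ i.
  by rewrite mulr_suml mulr_sumr; apply: eq_bigr => i _; rewrite -exprS exprSr.
rewrite mulrBr mulr1 comm_u -[X in X - _]mul1r -mulrBl -opprB mulNr -subrX1.
by rewrite un0 sub0r opprK.
Qed.

Lemma one_sub_mulC_left_inv (a b u : R) :
  u * (1 - a * b) = 1 -> (1 + b * u * a) * (1 - b * a) = 1.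
Proof.
move=> uab; rewrite mulrDl mul1r -addrA -[X in _ = X]addr0; congr (_ + _).
have -> : b * u * a * (1 - b * a) = b * (u * (1 - a * b)) * a.
  by rewrite !mulrBr !mulr1 mulrBl !mulrA.
by rewrite uab mulr1 addNr.
Qed.

End RingFacts.

Section FiniteRing.
Variable R : finPzRingType.
Implicit Types e f w x : R.

Lemma idempotent_power w : exists2 m, (0 < m)%N & w ^+ m * w ^+ m = w ^+ m.
Proof.
have /injectivePn[i [j neq_ij eq_ij]] : ~~ injectiveb (fun i : 'I_#|R|.+1 => w ^+ i.+1).
  by apply/injectiveP => /leq_card; rewrite card_ord ltnn.
wlog lt_ij : i j neq_ij eq_ij / (i < j)%N.
  move=> IH; case: (ltngtP i j) => [|lt_ji|/val_inj eqij]; first exact: IH.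
    by apply: (IH j i); rewrite 1?eq_sym.
  by rewrite eqij eqxx in neq_ij.
move: eq_ij => /= eq_ij; set a := i.+1; set p := (j - i)%N.
have periodic k : w ^+ (a + k * p) = w ^+ a.
  elim: k => [|k IHk]; first by rewrite addn0.
  by rewrite mulSn addnCA exprD IHk -exprD addnC addSn subnKC 1?ltnW.
exists (a * p)%N; first by rewrite muln_gt0 subn_gt0.
have le_a_ap : (a <= a * p)%N by rewrite leq_pmulr // subn_gt0.
by rewrite -exprD -{1}(subnK le_a_ap) -addnA exprD periodic -exprD subnK.
Qed.

Definition primitive_idem e : bool :=
  [forall f, [&& f * f == f, e * f == f & f * e == f] ==> (f == 0) || (f == e)].

Definition corner e : {set R} := [set e * x * e | x : R].

Lemma corner_card_lt f e : f * f = f -> f * e = e -> e * f = e -> e * e = e ->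
  e != f -> (#|corner e| < #|corner f|)%N.
Proof.
move=> ff fe ef ee neq_ef; apply: proper_card; rewrite properE; apply/andP; split.
  apply/subsetP=> _ /imsetP[x _ ->]; apply/imsetP; exists (e * x * e) => //.
  by rewrite !mulrA fe -!mulrA ef.
apply/subsetPn; exists f; first by apply/imsetP; exists 1 => //; rewrite mulr1 ff.
apply: contra neq_ef => /imsetP[y _ fy].
by rewrite -{1}ef fy !mulrA ee.
Qed.

Definition primitive_decomposition f (E : {set R}) :=
  [/\ {in E, forall e, [/\ e * e = e, e != 0, primitive_idem e, f * e = e & e * f = e]},
      {in E &, forall e e', e != e' -> e * e' = 0}
    & \sum_(e in E) e = f].

Lemma primitive_decompositionU g h E1 E2 : g * h = 0 -> h * g = 0 ->
  primitive_decomposition g E1 -> primitive_decomposition h E2 ->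
  primitive_decomposition (g + h) (E1 :|: E2).
Proof.
move=> gh hg [E1idem E1orth E1sum] [E2idem E2orth E2sum].
have orth12 e e' : e \in E1 -> e' \in E2 -> e * e' = 0 /\ e' * e = 0.
  move=> /E1idem[_ _ _ ge eg] /E2idem[_ _ _ he' e'h]; split.
    by rewrite -eg -he' -mulrA (mulrA g) gh mul0r mulr0.
  by rewrite -e'h -ge -mulrA (mulrA h) hg mul0r mulr0.
have disj12 : [disjoint E1 & E2].
  apply/pred0P => e /=; apply/negbTE/andP => -[e1 e2].
  have [/E1idem[ee nz_e _ _ _] [ee' _]] := (e1, orth12 e e e1 e2).
  by rewrite -ee ee' eqxx in nz_e.
split.
- move=> e /setUP[/E1idem[ee nz_e pe ge eg] | /E2idem[ee nz_e pe he eh]]; split=> //.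
  + by rewrite mulrDl ge -[in h * e]ge mulrA hg mul0r addr0.
  + by rewrite mulrDr eg -[in e * h]eg -mulrA gh mulr0 addr0.
  + by rewrite mulrDl he -[in g * e]he mulrA gh mul0r add0r.
  + by rewrite mulrDr eh -[in e * g]eh -mulrA hg mulr0 add0r.
- move=> e e' /setUP[e1|e2] /setUP[e1'|e2'] neq_ee'.
  + exact: E1orth.
  + by case: (orth12 e e' e1 e2').
  + by case: (orth12 e' e e1' e2).
  + exact: E2orth.
- by rewrite (eq_bigl [predU E1 & E2]) ?bigU //= ?E1sum ?E2sum // => e; rewrite inE.
Qed.

Lemma idempotent_decomposition f : f * f = f ->
  exists E : {set R}, primitive_decomposition f E.
Proof.
move=> ff; have [n] := ubnP #|corner f|; elim: n f ff => // n IHn f ff lt_fn.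
have [->|nz_f] := eqVneq f 0.
  by exists set0; split=> [e|e e'|]; rewrite ?inE ?big_set0.
have [prim_f|] := boolP (primitive_idem f).
  exists [set f]; split=> [e /set1P->|e e' /set1P-> /set1P->|]; by rewrite ?eqxx ?big_set1.
case/forallPn => g; rewrite negb_imply negb_or.
case/andP => /and3P[/eqP gg /eqP fg /eqP gf] /andP[nz_g neq_gf].
pose h := f - g.
have hh : h * h = h by rewrite /h mulrBl !mulrBr ff fg gf gg subrr subr0.
have fh : f * h = h by rewrite /h mulrBr ff fg.
have hf : h * f = h by rewrite /h mulrBl ff gf.
have gh : g * h = 0 by rewrite /h mulrBr gf gg subrr.
have hg : h * g = 0 by rewrite /h mulrBl fg gg subrr.
have neq_hf : h != f by rewrite /h -subr_eq0 addrAC subrr add0r oppr_eq0.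
have [E1 dec_g] := IHn g gg (leq_trans (corner_card_lt ff fg gf gg neq_gf) lt_fn).
have [E2 dec_h] := IHn h hh (leq_trans (corner_card_lt ff fh hf hh neq_hf) lt_fn).
by exists (E1 :|: E2); rewrite -(subrKC g f); apply: primitive_decompositionU.
Qed.

Lemma primitive_corner_nilpotent e s w : e * e = e -> primitive_idem e ->
  s != 0 -> s * e = s -> e * w = w -> w * e = w -> s * w = 0 ->
  exists n, w ^+ n = 0.
Proof.
move=> ee prim_e nz_s se ew we sw; have [m m_gt0 idem_wm] := idempotent_power w.
have ewm : e * w ^+ m = w ^+ m by rewrite -(prednK m_gt0) exprS mulrA ew.
have wme : w ^+ m * e = w ^+ m by rewrite -(prednK m_gt0) exprSr -mulrA we.
move/forallP/(_ (w ^+ m)): prim_e; rewrite idem_wm ewm wme !eqxx /=.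
case/orP=> /eqP wm; first by exists m.
by rewrite -se -wm -(prednK m_gt0) exprS mulrA sw mul0r eqxx in nz_s.
Qed.

Lemma primitive_annihilated_left_inv e s x : e * e = e -> primitive_idem e ->
  s != 0 -> s * e = s -> e * x = x -> s * x = 0 ->
  forall y, exists u, u * (1 - y * x) = 1.
Proof.
move=> ee prim_e nz_s se ex sx y; pose w := x * y * e.
have ew : e * w = w by rewrite /w !mulrA ex.
have we : w * e = w by rewrite /w -mulrA ee.
have sw : s * w = 0 by rewrite /w !mulrA sx !mul0r.
have [n wn0] := primitive_corner_nilpotent ee prim_e nz_s se ew we sw.
have w_xy : w * (x * y) = x * y * (x * y) by rewrite /w -mulrA (mulrA e) ex.
have xyX k : (x * y) ^+ k.+1 = w ^+ k * (x * y).
  by elim: k => [|k IHk]; rewrite ?mul1r // exprSr IHk exprSr -(mulrA _ w) w_xy !mulrA.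
have yxX k : (y * x) ^+ k.+1 = y * (x * y) ^+ k * x.
  by elim: k => [|k IHk]; rewrite ?mulr1 // exprSr IHk exprSr -!mulrA.
apply: (@nilpotent_one_sub_left_inv _ _ n.+2).
by rewrite yxX xyX wn0 mul0r mulr0 mul0r.
Qed.

End FiniteRing.

Section GroupAlgebra.
Variables (K : finFieldType) (gT : finGroupType).

(* {ffun gT -> K} already carries the pointwise product; the alias KG carries
   the convolution product ga_mul. *)
Definition KG := {ffun gT -> K}.
HB.instance Definition _ := GRing.Zmodule.on KG.
HB.instance Definition _ := Finite.on KG.

Lemma ga_mulA : associative (@ga_mul K gT).
Proof.
move=> a b c; apply/ffunP=> g; rewrite /ga_mul !ffunE.
under eq_bigr => h _ do rewrite ffunE big_distrr.
under [RHS]eq_bigr => h _ do rewrite ffunE big_distrl.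
rewrite [RHS]exchange_big /=; apply: eq_bigr => k _.
rewrite [RHS](reindex_inj (mulgI k)) /=; apply: eq_bigr => l _.
by rewrite mulKg mulrA invMg mulgA.
Qed.

Lemma ga_mul1r : left_id (ga_one K gT) (@ga_mul K gT).
Proof.
move=> a; apply/ffunP=> g; rewrite ffunE (bigD1 1%g) //= big1 ?addr0.
  by rewrite ffunE eqxx mul1r invg1 mul1g.
by move=> h /negbTE nh; rewrite ffunE nh mul0r.
Qed.

Lemma ga_mulr1 : right_id (ga_one K gT) (@ga_mul K gT).
Proof.
move=> a; apply/ffunP=> g; rewrite ffunE (bigD1 g) //= big1 ?addr0.
  by rewrite ffunE mulVg eqxx mulr1.
move=> h neq_hg; rewrite ffunE -(inj_eq (mulgI h)) mulKVg mulg1 eq_sym.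
by rewrite (negbTE neq_hg) mulr0.
Qed.

Lemma ga_mulDl : left_distributive (@ga_mul K gT) +%R.
Proof.
move=> a b c; apply/ffunP=> g; rewrite !ffunE -big_split /=.
by apply: eq_bigr => h _; rewrite ffunE mulrDl.
Qed.

Lemma ga_mulDr : right_distributive (@ga_mul K gT) +%R.
Proof.
move=> a b c; apply/ffunP=> g; rewrite !ffunE -big_split /=.
by apply: eq_bigr => h _; rewrite ffunE mulrDr.
Qed.

Lemma ga_one_neq0 : ga_one K gT != 0 :> KG.
Proof. by apply/eqP => /ffunP/(_ 1%g)/eqP; rewrite !ffunE eqxx oner_eq0. Qed.

HB.instance Definition _ := GRing.Zmodule_isNzRing.Build KG
  ga_mulA ga_mul1r ga_mulr1 ga_mulDl ga_mulDr ga_one_neq0.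

Lemma ga_mulE (a b : KG) : a * b = ga_mul a b. Proof. by []. Qed.

Definition ga_delta (g : gT) : KG := [ffun x => (x == g)%:R].

Definition ga_scalar (k : K) : KG := [ffun x => k * (x == 1%g)%:R].

Lemma ga_scalarE k (a : KG) : ga_scalar k * a = [ffun g => k * a g].
Proof.
apply/ffunP=> g; rewrite ga_mulE !ffunE (bigD1 1%g) //= big1 ?addr0.
  by rewrite ffunE eqxx mulr1 invg1 mul1g.
by move=> h /negbTE neq_h1; rewrite ffunE neq_h1 mulr0 mul0r.
Qed.

Definition ga_tr (a : KG) : K := a 1%g.

Lemma ga_trM (a b : KG) : ga_tr (a * b) = \sum_h a h * b h^-1%g.
Proof. by rewrite /ga_tr ffunE; apply: eq_bigr => h _; rewrite mulg1. Qed.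

Lemma ga_trC (a b : KG) : ga_tr (a * b) = ga_tr (b * a).
Proof.
rewrite !ga_trM (reindex_inj invg_inj) /=; apply: eq_bigr => h _.
by rewrite invgK mulrC.
Qed.

Lemma ga_tr0 : ga_tr 0 = 0. Proof. by rewrite /ga_tr ffunE. Qed.

Lemma ga_tr_nondegenerate (y : KG) : (forall z, ga_tr (y * z) = 0) -> y = 0.
Proof.
move=> y_perp; apply/ffunP=> g; rewrite ffunE -(y_perp (ga_delta g^-1)) ga_trM.
rewrite (bigD1 g) //= ffunE eqxx mulr1 big1 ?addr0 // => h neq_hg.
by rewrite ffunE (inj_eq invg_inj) (negbTE neq_hg) mulr0.
Qed.

Definition ga_dual (c : gT -> K) : KG := [ffun h => c h^-1%g].

Lemma ga_tr_dual c (a : KG) : ga_tr (ga_dual c * a) = \sum_g a g * c g.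
Proof.
rewrite ga_trM (reindex_inj invg_inj) /=; apply: eq_bigr => h _.
by rewrite ffunE invgK mulrC.
Qed.

Lemma ga_tr_linear_form (lam : KG -> K) :
    (forall k (a b : KG), lam ([ffun g => k * a g] + b) = k * lam a + lam b) ->
  exists w, forall x, lam x = ga_tr (w * x).
Proof.
move=> lam_lin; have lamD a b : lam (a + b) = lam a + lam b.
  rewrite -[lam a]mul1r -lam_lin; congr (lam (_ + _)).
  by apply/ffunP=> g; rewrite ffunE mul1r.
have lam0 : lam 0 = 0 by apply: (@addrI _ (lam 0)); rewrite -lamD !addr0.
have lamZ k (a : KG) : lam [ffun g => k * a g] = k * lam a.
  by have := lam_lin k a 0; rewrite !addr0 lam0 addr0.
exists (ga_dual (lam \o ga_delta)) => x; rewrite ga_tr_dual.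
have -> : x = \sum_g [ffun h => x g * ga_delta g h].
  apply/ffunP=> h; rewrite sum_ffunE (bigD1 h) //= big1 ?addr0 => [|g neq_gh].
    by rewrite !ffunE eqxx mulr1.
  by rewrite !ffunE eq_sym (negbTE neq_gh) mulr0.
rewrite (big_morph lam lamD lam0); apply: eq_bigr => g _; rewrite lamZ sum_ffunE.
congr (_ * _); rewrite (bigD1 g) //= big1 ?addr0 => [|h neq_hg].
  by rewrite !ffunE eqxx mulr1.
by rewrite !ffunE eq_sym (negbTE neq_hg) mulr0.
Qed.

Lemma left_idealP (L : {set KG}) : reflect
  [/\ 0 \in L, {in L &, forall a b, a + b \in L} & forall x, {in L, forall a, x * a \in L}]
  (is_left_idealb L).
Proof.
apply: (iffP and3P) => -[L0 LD LM]; split=> //.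
- by move=> a b aL bL; move/forallP/(_ a)/forallP/(_ b): LD; rewrite aL bL.
- by move=> x a aL; move/forallP/(_ a)/forallP/(_ x): LM; rewrite aL.
- by apply/forallP=> a; apply/forallP=> b; apply/implyP=> aL; apply/implyP; apply: LD.
- by apply/forallP=> a; apply/forallP=> x; apply/implyP; apply: LM.
Qed.

Lemma right_idealP (L : {set KG}) : reflect
  [/\ 0 \in L, {in L &, forall a b, a + b \in L} & forall x, {in L, forall a, a * x \in L}]
  (is_right_idealb L).
Proof.
apply: (iffP and3P) => -[L0 LD LM]; split=> //.
- by move=> a b aL bL; move/forallP/(_ a)/forallP/(_ b): LD; rewrite aL bL.
- by move=> x a aL; move/forallP/(_ a)/forallP/(_ x): LM; rewrite aL.
- by apply/forallP=> a; apply/forallP=> b; apply/implyP=> aL; apply/implyP; apply: LD.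
- by apply/forallP=> a; apply/forallP=> x; apply/implyP; apply: LM.
Qed.

Lemma principal_left_ideal (a : KG) : is_left_idealb [set x * a | x : KG].
Proof.
apply/left_idealP; split.
- by apply/imsetP; exists 0; rewrite ?mul0r.
- by move=> _ _ /imsetP[x _ ->] /imsetP[y _ ->]; apply/imsetP; exists (x + y); rewrite ?mulrDl.
- by move=> z _ /imsetP[x _ ->]; apply/imsetP; exists (z * x); rewrite ?mulrA.
Qed.

Lemma principal_right_ideal (a : KG) : is_right_idealb [set a * x | x : KG].
Proof.
apply/right_idealP; split.
- by apply/imsetP; exists 0; rewrite ?mulr0.
- by move=> _ _ /imsetP[x _ ->] /imsetP[y _ ->]; apply/imsetP; exists (x + y); rewrite ?mulrDr.
- by move=> z _ /imsetP[x _ ->]; apply/imsetP; exists (x * z); rewrite ?mulrA.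
Qed.

Theorem frobenius_quotient_checkable (C : {set KG}) :
  is_twosided_ideal C -> frobenius_quotient C -> checkable C.
Proof.
case=> _ /right_idealP[_ _ CM] [lam [lam_lin lamC _ lam_right]].
have [w lamE] := ga_tr_linear_form lam_lin.
exists w; apply/setP=> a; rewrite inE -ga_mulE; apply/idP/eqP => [aC | wa0].
  by apply: ga_tr_nondegenerate => z; rewrite -mulrA -lamE lamC ?CM.
have /subsetP aKG_sub_C : [set (a : KG) * x | x : KG] \subset C.
  apply: lam_right; first exact: principal_right_ideal.
  move=> _ /imsetP[x _ ->].
  by rewrite lamE mulrA wa0 mul0r ga_tr0.
by apply: aKG_sub_C; apply/imsetP; exists 1; rewrite ?mulr1.
Qed.

Local Notation J := (jacobson K gT).

Lemma left_ideal1 (L : {set KG}) : is_left_idealb L -> 1 \in L -> L = setT.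
Proof.
case/left_idealP=> _ _ LM L1; apply/setP=> x.
by rewrite inE -[x]mulr1 LM.
Qed.

Lemma maximal_left_ideal_exists (L : {set KG}) : is_left_idealb L -> 1 \notin L ->
  exists2 M : {set KG}, maximal_left_idealb M & L \subset M.
Proof.
move=> idL L1; pose P (N : {set KG}) := [&& is_left_idealb N, L \subset N & 1 \notin N].
have PL : P L by rewrite /P idL subxx.
have [M /and3P[idM LM M1] maxM] := @arg_maxnP _ L P (fun N => #|N|) PL.
exists M => //; apply/and3P; split=> //.
  by apply: contraNneq M1 => ->; rewrite inE.
apply/forallP=> N; apply/implyP=> /andP[idN MN].
have [N1|N1] := boolP ((1 : KG) \in N); first by rewrite (left_ideal1 idN N1) eqxx orbT.
suff /eqP-> : M == N by rewrite eqxx.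
by rewrite eqEcard MN; apply: maxM; rewrite /P idN N1 (subset_trans LM MN).
Qed.

Lemma left_ideal_add_principal (M : {set KG}) a : is_left_idealb M ->
  is_left_idealb [set m + b * a | m in M, b in [set: KG]].
Proof.
case/left_idealP=> M0 MD MM; apply/left_idealP; split.
- by apply/imset2P; exists 0 0; rewrite ?inE ?mul0r ?addr0.
- move=> _ _ /imset2P[m1 b1 m1M _ ->] /imset2P[m2 b2 m2M _ ->].
  by apply/imset2P; exists (m1 + m2) (b1 + b2); rewrite ?inE ?MD // mulrDl addrACA.
- move=> z _ /imset2P[m b mM _ ->].
  by apply/imset2P; exists (z * m) (z * b); rewrite ?inE ?MM // mulrDr mulrA.
Qed.

Lemma jacobson_one_sub_left_inv (a y : KG) : a \in J -> exists u, u * (1 - y * a) = 1.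
Proof.
move=> aJ; have [/imsetP[u _ u1]|L1] := boolP (1 \in [set b * (1 - y * a) | b : KG]).
  by exists u.
have [M maxM LM] := maximal_left_ideal_exists (principal_left_ideal _) L1.
have aM : a \in M by move: aJ; rewrite inE => /forallP/(_ M); rewrite maxM.
case/and3P: maxM => idM neqMT _; case/left_idealP: (idM) => _ MD MM.
have M1 : (1 : KG) \in M.
  rewrite -(subrK (y * a) 1) MD ?MM //.
  by apply: (subsetP LM); apply/imsetP; exists 1; rewrite ?mul1r.
by rewrite (left_ideal1 idM M1) eqxx in neqMT.
Qed.

Lemma one_sub_left_inv_jacobson (a : KG) :
  (forall y, exists u, u * (1 - y * a) = 1) -> a \in J.
Proof.
move=> inv_a; rewrite inE; apply/forallP=> M; apply/implyP=> maxM.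
case/and3P: (maxM) => idM neqMT /forallP maxM'; case/left_idealP: (idM) => _ _ MM.
apply: contraTT neqMT => aM; pose N := [set m + b * a | m in M, b in [set: KG]].
have MN : M \subset N.
  by apply/subsetP=> m mM; apply/imset2P; exists m 0; rewrite ?inE ?mul0r ?addr0.
have := maxM' N; rewrite left_ideal_add_principal // MN /= => /orP[/eqP NM|/eqP NT].
  case/negP: aM; rewrite -NM; apply/imset2P; exists 0 1; rewrite ?inE ?mul1r ?add0r //.
  by case/left_idealP: idM.
have /imset2P[m b mM _ one_mba] : (1 : KG) \in N by rewrite NT inE.
have [u] := inv_a b; rewrite {1}one_mba addrK => um1.
have M1 : (1 : KG) \in M by rewrite -um1 MM.
by rewrite (left_ideal1 idM M1) eqxx.
Qed.

Lemma jacobson_left_ideal : is_left_idealb J.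
Proof.
apply/left_idealP; split.
- by apply: one_sub_left_inv_jacobson => y; exists 1; rewrite mulr0 subr0 mulr1.
- move=> a b; rewrite !inE => /forallP aM /forallP bM; apply/forallP=> M.
  apply/implyP=> maxM; case/and3P: (maxM) => /left_idealP[_ MD _] _ _.
  by rewrite MD ?(implyP (aM M)) ?(implyP (bM M)).
- move=> x a; rewrite !inE => /forallP aM; apply/forallP=> M.
  apply/implyP=> maxM; case/and3P: (maxM) => /left_idealP[_ _ MM] _ _.
  by rewrite MM ?(implyP (aM M)).
Qed.

Lemma jacobson_mulr (a x : KG) : a \in J -> a * x \in J.
Proof.
move=> aJ; apply: one_sub_left_inv_jacobson => y.
have [u /one_sub_mulC_left_inv] := jacobson_one_sub_left_inv (x * y) aJ.
by rewrite [a * (x * y)]mulrA => /one_sub_mulC_left_inv inv_yax; eexists; exact: inv_yax.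
Qed.

Lemma ga_tr_separates (S : {set KG}) (e : KG) : is_left_idealb S -> e \notin S ->
  exists w, {in S, forall j, ga_tr (w * j) = 0} /\ ga_tr (w * e) != 0.
Proof.
case/left_idealP=> S0 SD SM eS.
pose vec (a : KG) : 'rV[K]_#|gT| := \row_l a (enum_val l).
pose V : 'M[K]_(#|S|, #|gT|) := \matrix_(i, l) (enum_val i : KG) (enum_val l).
pose C := cokermx V.
(* A column of C kills every row of V, i.e. every element of S, but not vec e. *)
have /existsP[k nz_k] : [exists k, (vec e *m C) 0 k != 0].
  apply: contraR eS => /existsPn eC0; have /submxP[D eD] : (vec e <= V)%MS.
    by rewrite submxE; apply/eqP/matrixP=> i l; rewrite ord1 [RHS]mxE; apply/eqP/negPn/eC0.
  have -> : e = \sum_i ga_scalar (D 0 i) * enum_val i.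
    apply/ffunP=> g; move/matrixP/(_ 0 (enum_rank g)): eD; rewrite !mxE enum_rankK => ->.
    by rewrite sum_ffunE; apply: eq_bigr => i _; rewrite ga_scalarE !mxE ffunE enum_rankK.
  by apply: (big_ind (fun x : KG => x \in S)) => // i _; rewrite SM ?enum_valP.
have sum_C (a : KG) : \sum_g a g * C (enum_rank g) k = (vec a *m C) 0 k.
  rewrite mxE (reindex (fun l : 'I_#|gT| => enum_val l)) /=; last exact/onW_bij/enum_val_bij.
  by apply: eq_bigr => l _; rewrite enum_valK; congr (_ * _); rewrite mxE.
exists (ga_dual (fun g => C (enum_rank g) k)); split; last by rewrite ga_tr_dual sum_C.
move=> j jS; rewrite ga_tr_dual sum_C.
have -> : vec j = row (enum_rank_in jS j) V by apply/rowP=> l; rewrite !mxE enum_rankK_in.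
by rewrite -row_mul mulmx_coker row0 mxE.
Qed.

Lemma jacobson_socle_element (e : KG) : e * e = e -> e != 0 ->
  exists s, [/\ s != 0, e * s = s, s * e = s & {in J, forall j, s * j = 0}].
Proof.
move=> ee nz_e; case/left_idealP: (jacobson_left_ideal) => _ _ JM.
have eJ : e \notin J.
  apply: contra nz_e => /(jacobson_one_sub_left_inv 1)[u].
  move/(congr1 (fun z => z * e)); rewrite -mulrA mulrBl mul1r ee subrr mulr0.
  by move=> <-.
have [w [wJ nz_we]] := ga_tr_separates jacobson_left_ideal eJ.
exists (e * w * e); split.
- apply: contra nz_we => /eqP ewe0.
  by rewrite -ee mulrA ga_trC !mulrA ewe0 ga_tr0.
- by rewrite !mulrA ee.
- by rewrite -mulrA ee.
move=> j jJ; apply: ga_tr_nondegenerate => z.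
by rewrite -!mulrA ga_trC -!mulrA wJ // JM // jacobson_mulr.
Qed.

Theorem jacobson_checkable : checkable J.
Proof.
have [E [Eidem Eorth Esum]] := idempotent_decomposition (mulr1 (1 : KG)).
have /fin_all_exists[s sP] : forall e : KG, exists t : KG, e \in E ->
    [/\ t != 0, e * t = t, t * e = t & {in J, forall j, t * j = 0}].
  move=> e; have [/Eidem[ee nz_e _ _ _]|_] := boolP (e \in E).
    by have [t tP] := jacobson_socle_element ee nz_e; exists t.
  by exists 0.
pose v := \sum_(e in E) s e.
have ev e : e \in E -> e * v = s e.
  move=> eE; rewrite mulr_sumr (bigD1 e) //= big1 ?addr0 => [|e' /andP[e'E neq_e'e]].
    by case: (sP e eE).
  case: (sP e' e'E) => _ e's _ _.
  by rewrite -e's mulrA (Eorth e e') ?mul0r // eq_sym.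
exists v; apply/setP=> a; rewrite [RHS]inE -ga_mulE; apply/idP/eqP => [aJ|va0].
  by rewrite mulr_suml big1 // => e /sP[_ _ _ ->].
have eaJ e : e \in E -> e * a \in J.
  move=> eE; have [ee _ prim_e _ _] := Eidem e eE; have [nz_s _ se _] := sP e eE.
  apply/one_sub_left_inv_jacobson/(primitive_annihilated_left_inv ee prim_e nz_s se).
    by rewrite mulrA ee.
  by rewrite mulrA se -(ev e eE) -mulrA va0 mulr0.
case/left_idealP: jacobson_left_ideal => J0 JD _.
have -> : a = (1 : KG) * a by rewrite mul1r.
by rewrite -Esum mulr_suml; apply: (big_ind (fun x : KG => x \in J)).
Qed.

End GroupAlgebra.

Theorem mainTheorem8 (K : finFieldType) (gT : finGroupType) :
  (forall C : {set {ffun gT -> K}},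
      is_twosided_ideal C -> frobenius_quotient C -> checkable C)
  /\ checkable (jacobson K gT).
Proof.
split; [exact: frobenius_quotient_checkable | exact: jacobson_checkable].
Qed.
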